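(* Let $S$ be a finite set of polyhedra in $\mathbb{R}^3$ and let $\Pi$ be the (finite) set of planes containing faces of polyhedra in $S$. For each $R\in\Pi$, the lines $R\cap R'$, for $R'\in\Pi$ not parallel to $R$, subdivide $R$; call the connected components of the complement in $R$ of the union of these lines the cells of $R$ (these are open convex subsets of $R$, some bounded and some unbounded). Then there exists $\varepsilon>0$ with the following property. Let $M$ be any finite set of point-plane markers such that each $(p,R)\in M$ has $p$ on a face $F$ of a polyhedron of $S$ with $R$ the plane of $F$, and such that for every face $F$ and every point $x\in F$ there is a marker $(p,R)\in M$ with $p\in F$, $R$ the plane of $F$, and $|x-p|<\varepsilon$. Then the set of planes $\{R:(p,R)\in M\}$ equals $\Pi$, and the union of all faces of all polyhedra of $S$ equals the union of the closures of those bounded cells $C$ of planes $R\in\Pi$ for which there is a marker $(p,R)\in M$ with $p\in C$. In particular the scene is unambiguously reconstructed from the marker data.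
   Context: A polygon is a closed, connected, two-dimensional region of a plane whose boundary consists of finitely many segments (edges) with endpoints (vertices), each vertex being an endpoint of two edges and two edges meeting only in a vertex. A polyhedron is a closed, connected, three-dimensional region of $\mathbb{R}^3$ whose boundary consists of finitely many polygons (faces) such that every edge of every face is shared with exactly one other face, two faces intersect only in shared edges or vertices, and the faces sharing a vertex can be cyclically ordered so that consecutive faces share an edge. Faces are taken to be maximal: the closures of the connected components of the set of points of $\partial P$ having a neighbourhood in $\partial P$ contained in a single plane. A point-plane marker is a pair $(p,R)$ with $R$ a plane in $\mathbb{R}^3$ and $p\in R$. *)

From Stdlib Require Import Reals List Arith.
Import ListNotations.
Open Scope R_scope.

Definition R3 : Type := (R * R * R)%type.
Definition pset : Type := R3 -> Prop.

Definition vsub (u v : R3) : R3 :=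
  let '(a, b, c) := u in let '(d, e, f) := v in (a - d, b - e, c - f).
Definition vadd (u v : R3) : R3 :=
  let '(a, b, c) := u in let '(d, e, f) := v in (a + d, b + e, c + f).
Definition vscale (t : R) (u : R3) : R3 :=
  let '(a, b, c) := u in (t * a, t * b, t * c).
Definition dot (u v : R3) : R :=
  let '(a, b, c) := u in let '(d, e, f) := v in a * d + b * e + c * f.
Definition vzero : R3 := (0, 0, 0).
Definition norm (u : R3) : R := sqrt (dot u u).
Definition edist (x y : R3) : R := norm (vsub x y).

Definition open_set (A : pset) : Prop :=
  forall x, A x -> exists e, 0 < e /\ forall y, edist x y < e -> A y.
Definition closed_set (A : pset) : Prop := open_set (fun x => ~ A x).
Definition closure (A : pset) : pset :=
  fun x => forall e, 0 < e -> exists y, A y /\ edist x y < e.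
Definition interior (A : pset) : pset :=
  fun x => exists e, 0 < e /\ forall y, edist x y < e -> A y.
Definition boundary (A : pset) : pset :=
  fun x => closure A x /\ ~ interior A x.
Definition subset (A B : pset) : Prop := forall x, A x -> B x.
Definition connected (A : pset) : Prop :=
  forall U V : pset, open_set U -> open_set V ->
    subset A (fun x => U x \/ V x) ->
    (forall x, ~ (A x /\ U x /\ V x)) ->
    (exists x, A x /\ U x) -> (exists x, A x /\ V x) -> False.
Definition component_of (A : pset) (x : R3) : pset :=
  fun y => exists B : pset, connected B /\ subset B A /\ B x /\ B y.
Definition is_component (A C : pset) : Prop :=
  exists x, A x /\ forall y, C y <-> component_of A x y.
Definition bounded_set (A : pset) : Prop :=
  exists B, forall x, A x -> norm x <= B.

Definition is_plane (P : pset) : Prop :=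
  exists n c, n <> vzero /\ forall x, P x <-> dot n x = c.
Definition parallel (P Q : pset) : Prop :=
  exists n c m d k, n <> vzero /\ m <> vzero /\
    (forall x, P x <-> dot n x = c) /\ (forall x, Q x <-> dot m x = d) /\
    m = vscale k n.
Definition plane_of (F P : pset) : Prop := is_plane P /\ subset F P.

Definition edge : Type := (R3 * R3)%type.
Definition seg (e : edge) : pset :=
  fun x => exists t, 0 <= t <= 1 /\ x = vadd (fst e) (vscale t (vsub (snd e) (fst e))).
Definition is_endpoint (e : edge) (v : R3) : Prop := v = fst e \/ v = snd e.
Definition same_edge (e e' : edge) : Prop :=
  (fst e = fst e' /\ snd e = snd e') \/ (fst e = snd e' /\ snd e = fst e').

Definition rel_interior (Pl Q : pset) : pset :=
  fun x => Q x /\ exists e, 0 < e /\ forall y, Pl y -> edist x y < e -> Q y.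

Definition edge_default : edge := (vzero, vzero).

Definition is_polygon_with (Q : pset) (es : list edge) : Prop :=
  exists Pl : pset,
    is_plane Pl /\ subset Q Pl /\
    closed_set Q /\ connected Q /\
    (* two-dimensional region of the plane *)
    (exists x, rel_interior Pl Q x) /\ subset Q (closure (rel_interior Pl Q)) /\
    (forall x, (Q x /\ ~ rel_interior Pl Q x) <-> exists e, In e es /\ seg e x) /\
    (forall e, In e es -> fst e <> snd e) /\
    (forall v, (exists e, In e es /\ is_endpoint e v) ->
       exists i j, (i < length es)%nat /\ (j < length es)%nat /\ i <> j /\
         is_endpoint (nth i es edge_default) v /\ is_endpoint (nth j es edge_default) v /\
         forall k, (k < length es)%nat -> is_endpoint (nth k es edge_default) v ->
           k = i \/ k = j) /\
    (forall i j x, (i < length es)%nat -> (j < length es)%nat -> i <> j ->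
       seg (nth i es edge_default) x -> seg (nth j es edge_default) x ->
       is_endpoint (nth i es edge_default) x /\ is_endpoint (nth j es edge_default) x).

Definition is_polygon (Q : pset) : Prop := exists es, is_polygon_with Q es.

Definition face_default : (pset * list edge) := (fun _ => False, nil).

Definition is_polyhedron (P : pset) : Prop :=
  closed_set P /\ connected P /\
  (* three-dimensional region *)
  (exists x, interior P x) /\ subset P (closure (interior P)) /\
  exists fs : list (pset * list edge),
    let n := length fs in
    let Fc i := fst (nth i fs face_default) in
    let Fe i := snd (nth i fs face_default) in
    let has_edge i e := exists e', In e' (Fe i) /\ same_edge e e' in
    let has_vertex i v := exists e, In e (Fe i) /\ is_endpoint e v in
    (forall i, (i < n)%nat -> is_polygon_with (Fc i) (Fe i)) /\
    (forall x, boundary P x <-> exists i, (i < n)%nat /\ Fc i x) /\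
    (forall i e, (i < n)%nat -> In e (Fe i) ->
       exists j, (j < n)%nat /\ j <> i /\ has_edge j e /\
         forall k, (k < n)%nat -> k <> i -> has_edge k e -> k = j) /\
    (forall i j x, (i < n)%nat -> (j < n)%nat -> i <> j -> Fc i x -> Fc j x ->
       (exists e, In e (Fe i) /\ has_edge j e /\ seg e x) \/
       (has_vertex i x /\ has_vertex j x)) /\
    (* faces sharing a vertex can be cyclically ordered, consecutive ones
       sharing an edge (incident to that vertex) *)
    (forall v, (exists i, (i < n)%nat /\ has_vertex i v) ->
       exists l : list nat, NoDup l /\
         (forall i, In i l <-> ((i < n)%nat /\ has_vertex i v)) /\
         forall k, (k < length l)%nat ->
           exists e, In e (Fe (nth k l 0%nat)) /\
             has_edge (nth (Nat.modulo (S k) (length l)) l 0%nat) e /\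
             is_endpoint e v).

(** Maximal faces of a polyhedron: closures of the connected components of
    the set of boundary points having a neighbourhood in the boundary
    contained in a single plane. *)
Definition flat_point (P : pset) : pset :=
  fun x => boundary P x /\
    exists e, 0 < e /\ exists Pl, is_plane Pl /\
      forall y, boundary P y -> edist x y < e -> Pl y.
Definition is_face (P F : pset) : Prop :=
  exists C, is_component (flat_point P) C /\ forall y, F y <-> closure C y.

Definition face_planes (S : list pset) (Pl : pset) : Prop :=
  is_plane Pl /\ exists P F, In P S /\ is_face P F /\ subset F Pl.

Definition cut_lines (S : list pset) (Pl : pset) : pset :=
  fun y => exists Q, face_planes S Q /\ ~ parallel Pl Q /\ Pl y /\ Q y.
Definition is_cell (S : list pset) (Pl C : pset) : Prop :=
  is_component (fun y => Pl y /\ ~ cut_lines S Pl y) C.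

Definition marker : Type := (R3 * pset)%type.

(** Near a flat point the boundary is a disc of the flat plane, so a face is a closed region of
    its plane, and near a non-flat point of a face some polygon of the polyhedron leaves that
    plane, so the relative boundary of a face lies on the lines cut out by the other face planes.
    Hence a connected subset of a face plane that avoids the cut lines and meets the relative
    interior of a face stays inside the face: a cell containing a marker lies in the marker's face.
    Conversely, the finitely many cut lines split each of the finitely many face planes into
    finitely many sign regions, and [eps] is chosen so that each region contains a disc of
    radius [eps]. Every point of a face is a limit of points of such regions inside the face;
    the marker near the centre of the disc lies in the region, hence in its cell, and that cell
    is bounded because the face is covered by [eps]-balls around finitely many markers. *)

From Stdlib Require Import Reals List Lra Lia Classical FunctionalExtensionality PropExtensionality.
Open Scope R_scope.

Definition sqnorm (u : R3) : R := dot u u.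

(* Loops on a vector that is a section variable, so it is only used outside sections. *)
Ltac vdestruct := repeat match goal with
  | x : R3 |- _ => let a := fresh "a" in let b := fresh "b" in let c := fresh "c" in
                   destruct x as [[a b] c]
  | x : (R * R * R)%type |- _ => let a := fresh "a" in let b := fresh "b" in let c := fresh "c" in
                   destruct x as [[a b] c]
  end.
Ltac vunfold := unfold sqnorm, dot, vsub, vadd, vscale, vzero in *; simpl in *.
Ltac vring := vdestruct; vunfold;
  lazymatch goal with
  | |- @eq R _ _ => ring
  | |- _ => f_equal; [f_equal|]; ring
  end.

(** * Vectors and the Euclidean distance *)

Lemma sqnorm_ge0 u : 0 <= sqnorm u.
Proof. vdestruct; vunfold; nra. Qed.

Lemma sqnorm_gt0 n : n <> vzero -> 0 < sqnorm n.
Proof.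
  intros Hn. destruct n as [[a b] c]. vunfold.
  destruct (Req_dec a 0), (Req_dec b 0), (Req_dec c 0); subst;
    try (exfalso; apply Hn; reflexivity); nra.
Qed.

Lemma norm_ge0 u : 0 <= norm u.
Proof. apply sqrt_pos. Qed.

Lemma norm_sqr u : norm u * norm u = sqnorm u.
Proof. apply sqrt_sqrt, sqnorm_ge0. Qed.

Lemma dot_le_norm_mul u v : dot u v <= norm u * norm v.
Proof.
  assert (Hsq : dot u v * dot u v <= sqnorm u * sqnorm v).
  { destruct u as [[a1 a2] a3], v as [[b1 b2] b3]; vunfold.
    pose proof (Rle_0_sqr (a1*b2 - a2*b1)); pose proof (Rle_0_sqr (a1*b3 - a3*b1));
    pose proof (Rle_0_sqr (a2*b3 - a3*b2)); unfold Rsqr in *; nra. }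
  pose proof (norm_sqr u); pose proof (norm_sqr v).
  pose proof (norm_ge0 u); pose proof (norm_ge0 v).
  destruct (Rle_lt_dec (dot u v) (norm u * norm v)); auto.
  assert (0 <= norm u * norm v) by nra. nra.
Qed.

Lemma norm_add_le u v : norm (vadd u v) <= norm u + norm v.
Proof.
  pose proof (norm_ge0 u); pose proof (norm_ge0 v); pose proof (norm_ge0 (vadd u v)).
  pose proof (dot_le_norm_mul u v); pose proof (norm_sqr u); pose proof (norm_sqr v).
  pose proof (norm_sqr (vadd u v)).
  assert (E : sqnorm (vadd u v) = sqnorm u + 2 * dot u v + sqnorm v) by vring.
  nra.
Qed.

Lemma norm_scale t u : norm (vscale t u) = Rabs t * norm u.
Proof.
  unfold norm. replace (dot (vscale t u) (vscale t u)) with (t * t * sqnorm u) by vring.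
  rewrite sqrt_mult_alt by nra. rewrite <- sqrt_Rsqr_abs. reflexivity.
Qed.

Lemma edist_sym x y : edist x y = edist y x.
Proof. unfold edist, norm. f_equal. vring. Qed.

Lemma edist_refl x : edist x x = 0.
Proof. unfold edist, norm. replace (dot (vsub x x) (vsub x x)) with 0 by vring. apply sqrt_0. Qed.

Lemma edist_ge0 x y : 0 <= edist x y.
Proof. apply norm_ge0. Qed.

Lemma edist_triangle x y z : edist x z <= edist x y + edist y z.
Proof.
  unfold edist. replace (vsub x z) with (vadd (vsub x y) (vsub y z)) by vring.
  apply norm_add_le.
Qed.

Lemma edist_translate z t w : edist z (vadd z (vscale t w)) = Rabs t * norm w.
Proof.
  unfold edist. rewrite <- (Rabs_Ropp t), <- norm_scale. f_equal. vring.
Qed.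

Lemma dot_translate n z t w : dot n (vadd z (vscale t w)) = dot n z + t * dot n w.
Proof. vring. Qed.

Lemma dot_scale_l k n v : dot (vscale k n) v = k * dot n v.
Proof. vring. Qed.

Lemma vscale_neq0 k n : k <> 0 -> n <> vzero -> vscale k n <> vzero.
Proof.
  intros Hk Hn E. apply Hn. replace n with (vscale (/ k) (vscale k n)) by (vdestruct; vunfold; f_equal; [f_equal|]; field; auto).
  rewrite E. vring.
Qed.

Lemma dot_lipschitz n x y : Rabs (dot n x - dot n y) <= norm n * edist x y.
Proof.
  unfold edist. replace (dot n x - dot n y) with (dot n (vsub x y)) by vring.
  unfold Rabs; destruct (Rcase_abs _).
  - replace (- dot n (vsub x y)) with (dot n (vsub y x)) by vring.
    replace (norm (vsub x y)) with (norm (vsub y x)) by (unfold norm; f_equal; vring).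
    apply dot_le_norm_mul.
  - apply dot_le_norm_mul.
Qed.

Lemma dot_neq_ball n c y : dot n y <> c ->
  exists r, 0 < r /\ forall w, edist y w < r -> 0 < (dot n y - c) * (dot n w - c).
Proof.
  intros Hy. pose proof (norm_ge0 n).
  exists (Rabs (dot n y - c) / (norm n + 1)). split.
  { apply Rdiv_lt_0_compat; [apply Rabs_pos_lt|]; lra. }
  intros w Hw. pose proof (dot_lipschitz n w y) as Hlip. rewrite edist_sym in Hlip.
  assert (Hd : (norm n + 1) * edist y w < Rabs (dot n y - c)).
  { apply (Rmult_lt_compat_l (norm n + 1)) in Hw; [|lra].
    field_simplify in Hw; lra. }
  pose proof (edist_ge0 y w).
  assert (Hb : Rabs (dot n w - dot n y) < Rabs (dot n y - c)) by nra.
  revert Hb; unfold Rabs; repeat destruct Rcase_abs; intros; nra.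
Qed.

Lemma small_step z w r : 0 < r -> exists t, 0 < t /\ edist z (vadd z (vscale t w)) < r.
Proof.
  intros Hr. pose proof (norm_ge0 w).
  exists (r / (2 * (norm w + 1))). split; [apply Rdiv_lt_0_compat; lra|].
  rewrite edist_translate, Rabs_right by (left; apply Rdiv_lt_0_compat; lra).
  apply (Rmult_lt_reg_r (2 * (norm w + 1))); [lra|].
  field_simplify; [nra|lra].
Qed.

(** * Metric topology *)

Lemma pset_ext (A B : pset) : (forall x, A x <-> B x) -> A = B.
Proof.
  intros H. apply functional_extensionality; intro x.
  apply propositional_extensionality; auto.
Qed.

Lemma closure_mono (A B : pset) x : subset A B -> closure A x -> closure B x.
Proof. intros HS H e He. destruct (H e He) as [y [Hy1 Hy2]]. exists y; auto. Qed.

Lemma closure_self (A : pset) x : A x -> closure A x.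
Proof. intros H e He. exists x. rewrite edist_refl; auto. Qed.

Lemma closure_idem (A : pset) x : closure (closure A) x -> closure A x.
Proof.
  intros H e He. destruct (H (e/2)) as [y [Hy1 Hy2]]; [lra|].
  destruct (Hy1 (e/2)) as [z [Hz1 Hz2]]; [lra|].
  exists z. pose proof (edist_triangle x y z). split; auto; lra.
Qed.

Lemma closed_closure (A : pset) x : closed_set A -> closure A x -> A x.
Proof.
  intros Hc H. apply NNPP; intro Hn. destruct (Hc x Hn) as [e [He Hb]].
  destruct (H e He) as [y [Hy1 Hy2]]. exact (Hb y Hy2 Hy1).
Qed.

Lemma not_closure (A : pset) x : ~ closure A x -> exists e, 0 < e /\ forall y, A y -> e <= edist x y.
Proof.
  intros H. apply NNPP; intro H2. apply H. intros e He.
  apply NNPP; intro H3. apply H2. exists e; split; auto. intros y Hy.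
  destruct (Rle_lt_dec e (edist x y)); auto. exfalso; eauto.
Qed.

Lemma interior_sub (A : pset) x : interior A x -> A x.
Proof. intros [e [He H]]. apply H. rewrite edist_refl; auto. Qed.

Lemma interior_open (A : pset) : open_set (interior A).
Proof.
  intros y [e [He H]]. exists (e/2). split; [lra|]. intros w Hw.
  exists (e/2). split; [lra|]. intros v Hv. apply H. pose proof (edist_triangle y w v). lra.
Qed.

Lemma boundary_closed (A : pset) : closed_set A -> forall x, boundary A x -> A x.
Proof. intros Hc x [H _]. apply closed_closure; auto. Qed.

Lemma closure_boundary (A : pset) x : closure (boundary A) x -> boundary A x.
Proof.
  intros H. split.
  - apply closure_idem. apply (closure_mono (boundary A)); auto. intros y [Hy _]; auto.
  - intros Hi. destruct (interior_open A x Hi) as [r [Hr Hb]].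
    destruct (H r Hr) as [y [[_ Hy] Hd]]. exact (Hy (Hb y Hd)).
Qed.

Lemma nonboundary_cases (A : pset) y : closed_set A -> ~ boundary A y -> interior A y \/ ~ A y.
Proof.
  intros Hc Hb. destruct (classic (A y)) as [Ay|Ay]; auto. left.
  apply NNPP; intro Hi. apply Hb. split; auto. apply closure_self; auto.
Qed.

Lemma plane_closed (Q : pset) : is_plane Q -> closed_set Q.
Proof.
  intros [n [c [Hn HQ]]] y Hy.
  assert (Hd : dot n y <> c) by (intro; apply Hy, HQ; auto).
  destruct (dot_neq_ball n c y Hd) as [r [Hr Hb]].
  exists r. split; auto. intros w Hw Qw. apply HQ in Qw.
  specialize (Hb w Hw). rewrite Qw in Hb. lra.
Qed.

Lemma list_uniform_radius {A : Type} (l : list A) (Phi : A -> R -> Prop) :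
  (forall a e e', Phi a e -> 0 < e' <= e -> Phi a e') ->
  (forall a, In a l -> exists e, 0 < e /\ Phi a e) ->
  exists e, 0 < e /\ forall a, In a l -> Phi a e.
Proof.
  intros Hm. induction l as [|a l IH]; intros H.
  - exists 1; split; [lra|]; intros a [].
  - destruct (H a (or_introl eq_refl)) as [e1 [He1 Ph1]].
    destruct IH as [e2 [He2 Ph2]]; [intros b Hb; apply H; right; auto|].
    exists (Rmin e1 e2). pose proof (Rmin_l e1 e2); pose proof (Rmin_r e1 e2).
    assert (0 < Rmin e1 e2) by (apply Rmin_pos; auto).
    split; auto. intros b [<-|Hb]; [apply (Hm a e1)|apply (Hm b e2)]; auto; lra.
Qed.

Lemma nat_uniform_radius (n : nat) (Phi : nat -> R -> Prop) :
  (forall a e e', Phi a e -> 0 < e' <= e -> Phi a e') ->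
  (forall a, (a < n)%nat -> exists e, 0 < e /\ Phi a e) ->
  exists e, 0 < e /\ forall a, (a < n)%nat -> Phi a e.
Proof.
  intros Hm H. destruct (list_uniform_radius (seq 0 n) Phi Hm) as [e [He Hp]].
  - intros a Ha. apply in_seq in Ha. apply H. lia.
  - exists e; split; auto. intros a Ha. apply Hp, in_seq. lia.
Qed.

Lemma closure_finite_union {A : Type} (l : list A) (F : A -> pset) x :
  closure (fun y => exists a, In a l /\ F a y) x -> exists a, In a l /\ closure (F a) x.
Proof.
  induction l as [|a l IH]; intros H.
  - destruct (H 1) as [y [[a [[] _]] _]]. lra.
  - destruct (classic (closure (F a) x)) as [Hc|Hc]; [exists a; split; auto; left; auto|].
    destruct (not_closure _ _ Hc) as [e0 [He0 Hfar]].
    destruct IH as [b [Hb1 Hb2]]; [|exists b; split; auto; right; auto].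
    intros e He. destruct (H (Rmin e e0)) as [y [[b [[<-|Hb1] Hb2]] Hy]];
      [apply Rmin_pos; auto| |];
      pose proof (Rmin_l e e0); pose proof (Rmin_r e e0).
    + specialize (Hfar y Hb2). lra.
    + exists y. split; [exists b; auto|lra].
Qed.

(** * Convexity and connectedness *)

Definition seg_point (a b : R3) (t : R) : R3 := vadd a (vscale t (vsub b a)).

Lemma seg_point0 a b : seg_point a b 0 = a.
Proof. unfold seg_point; vring. Qed.

Lemma seg_point1 a b : seg_point a b 1 = b.
Proof. unfold seg_point; vring. Qed.

Lemma edist_seg_point a b t s : edist (seg_point a b t) (seg_point a b s) = Rabs (t - s) * edist a b.
Proof.
  rewrite (edist_sym a b). unfold edist. rewrite <- norm_scale. f_equal. unfold seg_point; vring.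
Qed.

Lemma dot_seg_point n a b t : dot n (seg_point a b t) = dot n a + t * (dot n b - dot n a).
Proof. unfold seg_point; vring. Qed.

Lemma seg_point_open (U : pset) a b t : open_set U -> U (seg_point a b t) ->
  exists d, 0 < d /\ forall s, Rabs (s - t) < d -> U (seg_point a b s).
Proof.
  intros HU Ut. destruct (HU _ Ut) as [e [He Hball]]. pose proof (edist_ge0 a b).
  exists (e / (edist a b + 1)). split; [apply Rdiv_lt_0_compat; lra|].
  intros s Hs. apply Hball. rewrite edist_seg_point, Rabs_minus_sym.
  apply (Rmult_lt_compat_r (edist a b + 1)) in Hs; [|lra].
  field_simplify in Hs; [|lra]. pose proof (Rabs_pos (s - t)). nra.
Qed.

(** Along a segment from [U] to [V], the supremum of the initial stretch lying in [U] can lie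
    neither in [U] nor in [V]. *)
Lemma segment_not_separated (U V : pset) a b :
  open_set U -> open_set V ->
  (forall t, 0 <= t <= 1 -> U (seg_point a b t) \/ V (seg_point a b t)) ->
  (forall t, 0 <= t <= 1 -> ~ (U (seg_point a b t) /\ V (seg_point a b t))) ->
  U a -> V b -> False.
Proof.
  intros HU HV Hcov Hdis Ua Vb.
  set (E := fun t => 0 <= t <= 1 /\ forall s, 0 <= s <= t -> U (seg_point a b s)).
  assert (HE0 : E 0).
  { split; [lra|]. intros s Hs. replace s with 0 by lra. rewrite seg_point0; auto. }
  destruct (completeness E) as [T [HTub HTlub]].
  { exists 1. intros t [Ht _]. lra. }
  { exists 0; auto. }
  assert (T0 : 0 <= T) by (apply HTub; auto).
  assert (T1 : T <= 1) by (apply HTlub; intros t [Ht _]; lra).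
  assert (Hbelow : forall s, 0 <= s < T -> U (seg_point a b s)).
  { intros s Hs. apply NNPP; intro Hn.
    assert (is_upper_bound E s).
    { intros s' [Hs' Hs'U]. destruct (Rle_lt_dec s' s); auto.
      exfalso; apply Hn, Hs'U; lra. }
    specialize (HTlub s H). lra. }
  destruct (Hcov T (conj T0 T1)) as [UT|VT].
  - destruct (seg_point_open U a b T HU UT) as [d [Hd Hnear]].
    assert (T < 1).
    { destruct (Req_dec T 1) as [->|]; [|lra].
      exfalso. apply (Hdis 1); [lra|]. rewrite seg_point1 in *; auto. }
    set (T' := Rmin 1 (T + d/2)).
    assert (T < T' <= 1) by (unfold T'; split; [apply Rmin_glb_lt; lra|apply Rmin_l]).
    assert (E T').
    { split; [lra|]. intros s Hs. destruct (Rlt_le_dec s T); [apply Hbelow; lra|].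
      apply Hnear. unfold T' in *. pose proof (Rmin_r 1 (T + d/2)). rewrite Rabs_right; lra. }
    specialize (HTub T' H1). lra.
  - destruct (seg_point_open V a b T HV VT) as [d [Hd Hnear]].
    assert (0 < T).
    { destruct (Req_dec T 0) as [->|]; [|lra].
      exfalso. apply (Hdis 0); [lra|]. rewrite seg_point0 in *; auto. }
    set (s := Rmax 0 (T - d/2)).
    assert (0 <= s < T) by (unfold s; split; [apply Rmax_l|apply Rmax_lub_lt; lra]).
    apply (Hdis s); [lra|]. split; [apply Hbelow; lra|].
    apply Hnear. unfold s in *. pose proof (Rmax_r 0 (T - d/2)). rewrite Rabs_left1; lra.
Qed.

Definition convex (A : pset) : Prop :=
  forall a b t, A a -> A b -> 0 <= t <= 1 -> A (seg_point a b t).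

Lemma convex_connected (A : pset) : convex A -> connected A.
Proof.
  intros Hc U V HU HV Hcov Hdis [a [Aa Ua]] [b [Ab Vb]].
  apply (segment_not_separated U V a b HU HV); [intros t Ht..| exact Ua | exact Vb].
  - apply Hcov, Hc; auto.
  - intros HUV. apply (Hdis (seg_point a b t)). split; [apply Hc|]; auto.
Qed.

Lemma convexI (A B : pset) : convex A -> convex B -> convex (fun x => A x /\ B x).
Proof. intros HA HB a b t [Ha1 Ha2] [Hb1 Hb2] Ht; split; auto. Qed.

Lemma convex_ball z r : convex (fun y => edist z y < r).
Proof.
  intros a b t Ha Hb Ht. unfold edist in *.
  replace (vsub z (seg_point a b t)) with (vadd (vscale (1 - t) (vsub z a)) (vscale t (vsub z b)))
    by (unfold seg_point; vring).
  eapply Rle_lt_trans; [apply norm_add_le|]. rewrite !norm_scale, !Rabs_right by lra.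
  destruct (Req_dec t 0) as [->|]; [nra|].
  assert (t * norm (vsub z b) < t * r) by (apply Rmult_lt_compat_l; lra). nra.
Qed.

Lemma convex_plane Q : is_plane Q -> convex Q.
Proof.
  intros [n [c [Hn HQ]]] a b t Ha Hb Ht. apply HQ in Ha, Hb. apply HQ.
  rewrite dot_seg_point, Ha, Hb. ring.
Qed.

Lemma convex_open_halfspace n c : convex (fun y => c < dot n y).
Proof.
  intros a b t Ha Hb Ht. rewrite dot_seg_point.
  replace (dot n a + t * (dot n b - dot n a)) with ((1 - t) * dot n a + t * dot n b) by ring.
  destruct (Req_dec t 1) as [->|]; nra.
Qed.

Lemma connected_sub_side (H U V : pset) : connected H -> open_set U -> open_set V ->
  subset H (fun x => U x \/ V x) -> (forall x, ~ (H x /\ U x /\ V x)) ->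
  (exists a, H a /\ U a) -> subset H U.
Proof.
  intros C HU HV Hcov Hdis Ha b Hb. destruct (Hcov b Hb) as [Ub|Vb]; auto.
  exfalso. apply (C U V HU HV Hcov Hdis Ha). exists b; auto.
Qed.

Lemma connectedU (A1 A2 : pset) w :
  connected A1 -> connected A2 -> A1 w -> A2 w -> connected (fun x => A1 x \/ A2 x).
Proof.
  intros C1 C2 W1 W2 U V HU HV Hcov Hdis Hu Hv.
  assert (S1 : subset A1 (fun x => U x \/ V x)) by (intros x Hx; apply Hcov; auto).
  assert (S2 : subset A2 (fun x => U x \/ V x)) by (intros x Hx; apply Hcov; auto).
  assert (D1 : forall x, ~ (A1 x /\ U x /\ V x)) by (intros x [H1 H2]; apply (Hdis x); auto).
  assert (D2 : forall x, ~ (A2 x /\ U x /\ V x)) by (intros x [H1 H2]; apply (Hdis x); auto).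
  assert (Side : forall U' V', open_set U' -> open_set V' -> U' w ->
            subset A1 (fun x => U' x \/ V' x) -> subset A2 (fun x => U' x \/ V' x) ->
            (forall x, ~ (A1 x /\ U' x /\ V' x)) -> (forall x, ~ (A2 x /\ U' x /\ V' x)) ->
            forall x, A1 x \/ A2 x -> U' x).
  { intros U' V' HU' HV' Hw S1' S2' D1' D2' x [Ax|Ax].
    - apply (connected_sub_side A1 U' V'); eauto.
    - apply (connected_sub_side A2 U' V'); eauto. }
  destruct Hu as [u [Au Uu]], Hv as [v [Av Vv]].
  assert (Swap : forall (A : pset) U V, subset A (fun x => U x \/ V x) -> subset A (fun x => V x \/ U x))
    by (intros A U' V' Hs x Hx; destruct (Hs x Hx); auto).
  destruct (Hcov w (or_introl W1)) as [Uw|Vw].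
  - apply (Hdis v). split; auto. split; auto. apply (Side U V); auto.
  - apply (Hdis u). split; auto. split; auto. apply (Side V U); auto;
      try apply Swap; auto; intros x Hx; apply (Hdis x); tauto.
Qed.

Lemma component_of_sub (A : pset) x y : component_of A x y -> A y.
Proof. intros [B [_ [HB [_ Hy]]]]. auto. Qed.

Lemma component_of_self (A : pset) x : A x -> component_of A x x.
Proof.
  intros Ax. exists (fun y => y = x). split; [|split; [intros y ->; auto|auto]].
  intros U V _ _ _ Hdis [u [-> Uu]] [v [-> Vv]]. apply (Hdis x); auto.
Qed.

Lemma component_of_connected (A : pset) x : connected (component_of A x).
Proof.
  intros U V HU HV Hcov Hdis Hu Hv.
  assert (Kx : forall y, component_of A x y -> component_of A x x)
    by (intros y [B [CB [SB [Bx _]]]]; exists B; auto).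
  assert (Hsub : forall B y, connected B -> subset B A -> B x -> B y -> subset B (component_of A x))
    by (intros B y CB SB Bx By z Bz; exists B; auto).
  assert (Hsplit : forall y (U' V' : pset), open_set U' -> open_set V' -> component_of A x y ->
            subset (component_of A x) (fun x => U' x \/ V' x) ->
            (forall z, ~ (component_of A x z /\ U' z /\ V' z)) -> U' x -> V' y -> False).
  { intros y U' V' HU' HV' [B [CB [SB [Bx By]]]] Hcov' Hdis' Ux Vy.
    apply (CB U' V' HU' HV').
    - intros z Bz; apply Hcov'. eapply Hsub; eauto.
    - intros z [Bz Hz]. apply (Hdis' z). split; auto. eapply Hsub; eauto.
    - exists x; auto.
    - exists y; auto. }
  destruct Hu as [u [Ku Uu]], Hv as [v [Kv Vv]].
  destruct (Hcov x (Kx u Ku)) as [Ux|Vx].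
  - apply (Hsplit v U V); auto.
  - apply (Hsplit u V U); auto.
    + intros z Kz. destruct (Hcov z Kz); auto.
    + intros z Hz. apply (Hdis z). tauto.
Qed.

Lemma component_of_absorb (A B : pset) x w :
  connected B -> subset B A -> B w -> component_of A x w -> subset B (component_of A x).
Proof.
  intros CB SB Bw [B' [CB' [SB' [Bx' Bw']]]] y By.
  exists (fun z => B' z \/ B z). split; [eapply connectedU; eauto|].
  split; [intros z [Hz|Hz]; auto|]. split; auto.
Qed.

(** * Planes *)

(** That is, [m] is proportional to [n]. *)
Lemma normal_proportional (n m : R3) :
  (forall w, dot n w = 0 -> dot m w = 0) -> forall v, dot m v * sqnorm n = dot m n * dot n v.
Proof.
  intros H v. destruct n as [[n1 n2] n3], m as [[m1 m2] m3], v as [[v1 v2] v3].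
  pose proof (H ((n2, -n1), 0)) as E1; pose proof (H ((n3, 0), -n1)) as E2;
  pose proof (H ((0, n3), -n2)) as E3. vunfold.
  assert (F1 : m1 * n2 - m2 * n1 = 0) by (rewrite <- E1; ring).
  assert (F2 : m1 * n3 - m3 * n1 = 0) by (rewrite <- E2; ring).
  assert (F3 : m2 * n3 - m3 * n2 = 0) by (rewrite <- E3; ring).
  transitivity (v1 * (n2 * (m1*n2 - m2*n1) + n3 * (m1*n3 - m3*n1) + n1 * (m1*n1+m2*n2+m3*n3))
              + v2 * (- n1 * (m1*n2 - m2*n1) + n3 * (m2*n3 - m3*n2) + n2 * (m1*n1+m2*n2+m3*n3))
              + v3 * (- n1 * (m1*n3 - m3*n1) - n2 * (m2*n3 - m3*n2) + n3 * (m1*n1+m2*n2+m3*n3)));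
    [ring|rewrite F1, F2, F3; ring].
Qed.

Lemma plane_eq_of_disk (Pl Q : pset) z r :
  is_plane Pl -> is_plane Q -> Pl z -> 0 < r ->
  (forall y, Pl y -> edist z y < r -> Q y) -> forall y, Pl y <-> Q y.
Proof.
  intros [n [c [Hn HP]]] [m [d [Hm HQ]]] Pz Hr H.
  assert (Qz : Q z) by (apply H; [|rewrite edist_refl]; auto).
  apply HP in Pz. apply HQ in Qz.
  assert (Hperp : forall w, dot n w = 0 -> dot m w = 0).
  { intros w Hw. destruct (small_step z w r Hr) as [t [Ht Hd]].
    assert (Pl (vadd z (vscale t w))) by (apply HP; rewrite dot_translate, Hw, Pz; ring).
    specialize (H _ H0 Hd). apply HQ in H. rewrite dot_translate, Qz in H.
    assert (t * dot m w = 0) by lra. apply Rmult_integral in H1. destruct H1; lra. }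
  pose proof (normal_proportional n m Hperp) as Hprop.
  assert (Hmn : dot m n <> 0).
  { intros E. pose proof (Hprop m) as Em. rewrite E in Em.
    pose proof (sqnorm_gt0 n Hn); pose proof (sqnorm_gt0 m Hm). unfold sqnorm in *. nra. }
  pose proof (sqnorm_gt0 n Hn).
  intro y. rewrite HP, HQ. pose proof (Hprop (vsub y z)) as Ey.
  replace (dot m (vsub y z)) with (dot m y - d) in Ey by (rewrite <- Qz; vring).
  replace (dot n (vsub y z)) with (dot n y - c) in Ey by (rewrite <- Pz; vring).
  split; intro E; rewrite E in Ey.
  - replace (c - c) with 0 in Ey by ring. rewrite Rmult_0_r in Ey.
    apply Rmult_integral in Ey. destruct Ey; lra.
  - replace (d - d) with 0 in Ey by ring. rewrite Rmult_0_l in Ey.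
    symmetry in Ey. apply Rmult_integral in Ey. destruct Ey; lra.
Qed.

Lemma plane_nonempty Q : is_plane Q -> exists z, Q z.
Proof.
  intros [n [c [Hn HQ]]]. pose proof (sqnorm_gt0 n Hn).
  exists (vscale (c / sqnorm n) n). apply HQ. unfold sqnorm in *. vdestruct; vunfold. field. lra.
Qed.

Lemma plane_incl_eq (Pl Q : pset) : is_plane Pl -> is_plane Q -> subset Pl Q -> Pl = Q.
Proof.
  intros HP HQ H. destruct (plane_nonempty Pl HP) as [z Hz].
  apply pset_ext, (plane_eq_of_disk Pl Q z 1); auto. lra.
Qed.

Lemma parallel_refl Pl : is_plane Pl -> parallel Pl Pl.
Proof. intros [n [c [Hn HP]]]. exists n, c, n, c, 1. do 4 (split; [auto|]). vring. Qed.

Lemma parallel_meet_eq Pl Q y : parallel Pl Q -> Pl y -> Q y -> forall x, Pl x <-> Q x.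
Proof.
  intros [n [c [m [d [k [Hn [Hm [HP [HQ ->]]]]]]]]] Py Qy x.
  apply HP in Py; apply HQ in Qy. rewrite HP, HQ.
  assert (k <> 0) by (intros ->; apply Hm; vring).
  rewrite !dot_scale_l in *. split; intro E.
  - rewrite E, <- Qy, Py. auto.
  - rewrite <- Qy in E. apply Rmult_eq_reg_l in E; auto. rewrite E; auto.
Qed.

Lemma plane_avoid_planes (Pl : pset) (Ls : list pset) : is_plane Pl ->
  (forall Q, In Q Ls -> is_plane Q /\ exists q, Pl q /\ ~ Q q) ->
  forall z r, Pl z -> 0 < r -> exists y, Pl y /\ edist z y < r /\ forall Q, In Q Ls -> ~ Q y.
Proof.
  intros HPl. induction Ls as [|Q Ls IH]; intros HL z r Pz Hr.
  - exists z. rewrite edist_refl. split; [auto|split; [auto|intros Q []]].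
  - destruct (IH (fun Q' HQ' => HL Q' (or_intror HQ')) z (r/2) Pz) as [y1 [Py1 [Hy1 Hoff]]]; [lra|].
    destruct (list_uniform_radius Ls (fun Q' rho => forall w, edist y1 w < rho -> ~ Q' w))
      as [rho [Hrho Hrr]].
    { intros a e e' H [H0 H1] w Hw. apply H. lra. }
    { intros Q' HQ'. destruct (HL Q' (or_intror HQ')) as [HQp _].
      apply (plane_closed Q' HQp y1 (Hoff Q' HQ')). }
    destruct (HL Q (or_introl eq_refl)) as [HQ [q [Pq Nq]]].
    assert (Hex : exists y, Pl y /\ edist y1 y < Rmin rho (r/2) /\ ~ Q y).
    { apply NNPP; intro Hn. apply Nq.
      apply (plane_eq_of_disk Pl Q y1 (Rmin rho (r/2))); auto; [apply Rmin_pos; lra|].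
      intros y Py Hy. apply NNPP; intro Qy. apply Hn. exists y; auto. }
    destruct Hex as [y [Py [Hy Qy]]].
    pose proof (Rmin_l rho (r/2)); pose proof (Rmin_r rho (r/2)); pose proof (edist_triangle z y1 y).
    exists y. split; auto. split; [lra|].
    intros Q' [<-|HQ']; auto. apply (Hrr Q' HQ'). lra.
Qed.

(** * Regularly closed sets with a locally flat boundary *)

Definition half_ball (z : R3) (e : R) (n : R3) (c : R) : pset :=
  fun y => edist z y < e /\ c < dot n y.

Lemma half_ball_connected z e n c : connected (half_ball z e n c).
Proof. apply convex_connected, convexI; [apply convex_ball|apply convex_open_halfspace]. Qed.

Lemma half_ball_closure z e n c w : n <> vzero -> edist z w < e -> c <= dot n w ->
  closure (half_ball z e n c) w.
Proof.
  intros Hn Hw Hc r Hr.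
  destruct (small_step w n (Rmin r (e - edist z w))) as [t [Ht Hd]]; [apply Rmin_pos; lra|].
  pose proof (Rmin_l r (e - edist z w)); pose proof (Rmin_r r (e - edist z w)).
  pose proof (edist_triangle z w (vadd w (vscale t n))). pose proof (sqnorm_gt0 n Hn).
  exists (vadd w (vscale t n)). split; [split|]; try lra.
  rewrite dot_translate. unfold sqnorm in *. nra.
Qed.

Lemma ball_in_half_ball_closure z e n c w : n <> vzero -> edist z w < e ->
  closure (half_ball z e n c) w \/ closure (half_ball z e (vscale (-1) n) (- c)) w.
Proof.
  intros Hn Hw. destruct (Rle_lt_dec c (dot n w)).
  - left. apply half_ball_closure; auto.
  - right. apply half_ball_closure; [apply vscale_neq0; [lra|exact Hn]|exact Hw|].
    rewrite dot_scale_l. lra.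
Qed.

Section FlatBoundary.

Variables (P Q : pset) (z : R3) (e : R).
Hypotheses (HPc : closed_set P) (HPreg : subset P (closure (interior P)))
  (Hz : boundary P z) (HQ : is_plane Q) (He : 0 < e)
  (Hflat : forall b, boundary P b -> edist z b < e -> Q b).

(** Both open half balls on either side of [Q] miss the boundary, so each lies in the interior
    or in the exterior of [P], on the same side as any point of [Q] they accumulate at. *)
Lemma half_ball_sub_side (U V : pset) y n c :
  open_set U -> open_set V -> (forall x, ~ boundary P x -> U x \/ V x) ->
  (forall x, ~ (U x /\ V x)) -> n <> vzero -> (forall x, Q x <-> dot n x = c) ->
  U y -> closure (half_ball z e n c) y -> subset (half_ball z e n c) U.
Proof.
  intros HU HV Hcov Hdis Hn HQe Uy Hy.
  apply (connected_sub_side _ U V (half_ball_connected z e n c) HU HV).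
  - intros x [Hx Hc] . apply Hcov. intros Bx. specialize (Hflat x Bx Hx). apply HQe in Hflat. lra.
  - intros x [_ Hx]. apply (Hdis x Hx).
  - destruct (HU y Uy) as [r [Hr Hball]]. destruct (Hy r Hr) as [x [Hx Hxy]]. exists x; auto.
Qed.

Lemma flat_boundary_disk : forall y, Q y -> edist z y < e -> boundary P y.
Proof.
  intros y0 Qy0 Hy0. apply NNPP; intro Hnb.
  destruct HQ as [n [c [Hn HQe]]].
  set (n' := vscale (-1) n).
  assert (Hn' : n' <> vzero) by (apply vscale_neq0; [lra|exact Hn]).
  assert (HQe' : forall x, Q x <-> dot n' x = - c)
    by (intros x; rewrite HQe; unfold n'; rewrite dot_scale_l; lra).
  assert (Qc : dot n y0 = c) by (apply HQe; exact Qy0).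
  assert (C1 : closure (half_ball z e n c) y0) by (apply half_ball_closure; auto; lra).
  assert (C2 : closure (half_ball z e n' (- c)) y0).
  { apply half_ball_closure; auto. apply HQe' in Qy0. lra. }
  assert (Hcov : forall x, ~ boundary P x -> interior P x \/ ~ P x)
    by (intros x Hx; exact (nonboundary_cases P x HPc Hx)).
  assert (Hdis : forall x, ~ (interior P x /\ ~ P x))
    by (intros x [Ix Nx]; exact (Nx (interior_sub P x Ix))).
  assert (Hcov' : forall x, ~ boundary P x -> ~ P x \/ interior P x)
    by (intros x Hx; destruct (Hcov x Hx); auto).
  assert (Hdis' : forall x, ~ (~ P x /\ interior P x)) by (intros x [Nx Ix]; exact (Hdis x (conj Ix Nx))).
  destruct (nonboundary_cases P y0 HPc Hnb) as [Iy0|Ny0].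
  - (* the whole ball lies in [P], so [z] is interior *)
    pose proof (half_ball_sub_side _ _ y0 n c (interior_open P) HPc Hcov Hdis Hn HQe Iy0 C1) as S1.
    pose proof (half_ball_sub_side _ _ y0 n' (- c) (interior_open P) HPc Hcov Hdis Hn' HQe' Iy0 C2) as S2.
    apply (proj2 Hz). exists e. split; [exact He|]. intros w Hw.
    apply (closed_closure P w HPc).
    destruct (ball_in_half_ball_closure z e n c w Hn Hw) as [Cw|Cw];
      [apply (closure_mono _ _ w (fun x Hx => interior_sub P x (S1 x Hx)) Cw)
      |apply (closure_mono _ _ w (fun x Hx => interior_sub P x (S2 x Hx)) Cw)].
  - (* the ball misses [P], yet [z] is a limit of interior points *)
    pose proof (half_ball_sub_side _ _ y0 n c HPc (interior_open P) Hcov' Hdis' Hn HQe Ny0 C1) as S1.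
    pose proof (half_ball_sub_side _ _ y0 n' (- c) HPc (interior_open P) Hcov' Hdis' Hn' HQe' Ny0 C2) as S2.
    destruct (HPreg z (boundary_closed P HPc z Hz) e He) as [w [Iw Hw]].
    destruct (interior_open P w Iw) as [r [Hr Hrball]].
    destruct (ball_in_half_ball_closure z e n c w Hn Hw) as [Cw|Cw];
      destruct (Cw r Hr) as [x [Hx Hwx]];
      [apply (S1 x Hx)|apply (S2 x Hx)]; exact (interior_sub P x (Hrball x Hwx)).
Qed.

End FlatBoundary.

(** * Faces *)

Definition disk (Pl : pset) (z : R3) (r : R) : pset := fun y => Pl y /\ edist z y < r.

Lemma disk_connected Pl z r : is_plane Pl -> connected (disk Pl z r).
Proof. intros HPl. apply convex_connected, convexI; [apply convex_plane; auto|apply convex_ball]. Qed.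

Lemma flat_plane_center P Pl z e : boundary P z -> 0 < e ->
  (forall b, boundary P b -> edist z b < e -> Pl b) -> Pl z.
Proof. intros Hb He H. apply H; [|rewrite edist_refl]; auto. Qed.

Lemma face_as_closure P F : is_face P F ->
  exists x0, flat_point P x0 /\ F = closure (component_of (flat_point P) x0).
Proof.
  intros [C [[x0 [Hx0 HC]] HF]]. exists x0. split; auto.
  apply pset_ext. intro y. rewrite HF, (pset_ext C _ HC). tauto.
Qed.

Lemma face_nonempty P F : is_face P F -> exists x, F x.
Proof.
  intros HF. destruct (face_as_closure P F HF) as [x0 [Fx0 ->]].
  exists x0. apply closure_self, component_of_self; auto.
Qed.

Lemma face_closed P F x : is_face P F -> closure F x -> F x.
Proof. intros HF H. destruct (face_as_closure P F HF) as [x0 [_ ->]]. apply closure_idem; auto. Qed.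

Lemma face_sub_boundary P F : is_face P F -> subset F (boundary P).
Proof.
  intros HF x Fx. destruct (face_as_closure P F HF) as [x0 [_ ->]].
  apply closure_boundary. apply (closure_mono (component_of (flat_point P) x0)); auto.
  intros y Ky. exact (proj1 (component_of_sub _ _ _ Ky)).
Qed.

Section Faces.

Variable P : pset.
Hypotheses (HPc : closed_set P) (HPreg : subset P (closure (interior P))).

Lemma flat_disk_sub_flat z e Pz : boundary P z -> is_plane Pz -> 0 < e ->
  (forall b, boundary P b -> edist z b < e -> Pz b) -> subset (disk Pz z (e/2)) (flat_point P).
Proof.
  intros Hz HPz He Hfl y [Py Hy]. split; [apply (flat_boundary_disk P Pz z e); auto; lra|].
  exists (e/2). split; [lra|]. exists Pz. split; auto.
  intros b Hb Hyb. apply Hfl; auto. pose proof (edist_triangle z y b). lra.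
Qed.

Lemma flat_disk_sub_component x0 y e Py c : boundary P y -> is_plane Py -> 0 < e ->
  (forall b, boundary P b -> edist y b < e -> Py b) ->
  component_of (flat_point P) x0 c -> edist y c < e/2 ->
  subset (disk Py y (e/2)) (component_of (flat_point P) x0).
Proof.
  intros Hy HPy He Hfl Kc Hyc.
  apply (component_of_absorb _ _ x0 c (disk_connected Py y (e/2) HPy)
           (flat_disk_sub_flat y e Py Hy HPy He Hfl)); auto.
  split; auto. apply Hfl; [|lra]. exact (proj1 (component_of_sub _ _ _ Kc)).
Qed.

Lemma component_disk x0 Pl z : is_plane Pl ->
  subset (closure (component_of (flat_point P) x0)) Pl ->
  component_of (flat_point P) x0 z ->
  exists rho, 0 < rho /\ subset (disk Pl z rho) (component_of (flat_point P) x0).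
Proof.
  intros HPl Hsub Kz.
  destruct (component_of_sub _ _ _ Kz) as [Bz [e [He [Pz [HPz Hfl]]]]].
  pose proof (flat_disk_sub_component x0 z e Pz z Bz HPz He Hfl Kz) as Hd.
  rewrite edist_refl in Hd. specialize (Hd ltac:(lra)).
  assert (Heq : forall y, Pz y <-> Pl y).
  { apply (plane_eq_of_disk Pz Pl z (e/2)); auto; [eapply flat_plane_center; eauto|lra|].
    intros y Py Hy. apply Hsub, closure_self, Hd. split; auto. }
  exists (e/2). split; [lra|]. intros y [Py Hy]. apply Hd. split; auto. apply Heq; auto.
Qed.

Lemma face_contains_disk F : is_face P F ->
  exists z Pz rho, is_plane Pz /\ 0 < rho /\ Pz z /\ subset (disk Pz z rho) F.
Proof.
  intros HF. destruct (face_as_closure P F HF) as [x0 [Fx0 ->]].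
  pose proof Fx0 as [Bx [e [He [Px [HPx Hfl]]]]].
  exists x0, Px, (e/2). split; auto. split; [lra|]. split; [eapply flat_plane_center; eauto|].
  intros y Hy. apply closure_self.
  apply (flat_disk_sub_component x0 x0 e Px x0); auto; [apply component_of_self; auto|].
  rewrite edist_refl; lra.
Qed.

Lemma face_plane_unique F Q1 Q2 : is_face P F -> plane_of F Q1 -> plane_of F Q2 -> Q1 = Q2.
Proof.
  intros HF [H1 S1] [H2 S2].
  destruct (face_contains_disk F HF) as [z [Pz [rho [HPz [Hr [Pzz Hd]]]]]].
  assert (E1 : forall y, Pz y <-> Q1 y)
    by (apply (plane_eq_of_disk Pz Q1 z rho); auto; intros y Py Hy; apply S1, Hd; split; auto).
  assert (E2 : forall y, Pz y <-> Q2 y)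
    by (apply (plane_eq_of_disk Pz Q2 z rho); auto; intros y Py Hy; apply S2, Hd; split; auto).
  apply pset_ext. intro y. rewrite <- E1, <- E2. tauto.
Qed.

(** Having a flat neighbourhood inside [Pi] is an open condition, and so is having one in a
    different plane; by [plane_eq_of_disk] the two are exclusive, so connectedness keeps a
    component of flat points on one side. *)
Lemma flat_component_sub_plane w e Pi : flat_point P w -> is_plane Pi -> 0 < e ->
  (forall b, boundary P b -> edist w b < e -> Pi b) ->
  subset (component_of (flat_point P) w) Pi.
Proof.
  intros Fw HPi He Hw.
  set (U := fun u => exists eps, 0 < eps /\ forall b, boundary P b -> edist u b < eps -> Pi b).
  set (V := fun u => exists eps, 0 < eps /\ exists Q, is_plane Q /\ (exists q, Q q /\ ~ Pi q) /\
                 forall b, boundary P b -> edist u b < eps -> Q b).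
  set (K := component_of (flat_point P) w).
  assert (OU : open_set U).
  { intros u [eps [Heps H]]. exists (eps/2). split; [lra|]. intros u' Hu'.
    exists (eps/2). split; [lra|]. intros b Hb Hd. apply H; auto. pose proof (edist_triangle u u' b). lra. }
  assert (OV : open_set V).
  { intros u [eps [Heps [Q [HQ [Hq H]]]]]. exists (eps/2). split; [lra|]. intros u' Hu'.
    exists (eps/2). split; [lra|]. exists Q. split; auto. split; auto.
    intros b Hb Hd. apply H; auto. pose proof (edist_triangle u u' b). lra. }
  assert (Cov : subset K (fun x => U x \/ V x)).
  { intros k Kk. destruct (component_of_sub _ _ _ Kk) as [Bk [eps [Heps [Pk [HPk Hk]]]]].
    destruct (classic (subset Pk Pi)) as [Hs|Hs].
    - left. exists eps. split; auto.
    - right. exists eps. split; auto. exists Pk. split; auto. split; auto.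
      apply NNPP; intro Hn. apply Hs. intros x Px. apply NNPP; intro Hx. apply Hn. exists x; auto. }
  assert (Dis : forall x, ~ (K x /\ U x /\ V x)).
  { intros k [Kk [[e1 [He1 H1]] [e2 [He2 [Q [HQ [[q [Qq Nq]] H2]]]]]]].
    assert (Bk : boundary P k) by exact (proj1 (component_of_sub _ _ _ Kk)).
    apply Nq. apply (plane_eq_of_disk Q Pi k (Rmin e1 e2)); auto;
      [eapply flat_plane_center; eauto|apply Rmin_pos; auto|].
    intros y Qy Hy. pose proof (Rmin_l e1 e2); pose proof (Rmin_r e1 e2).
    apply H1; [apply (flat_boundary_disk P Q k e2); auto|]; lra. }
  assert (KU : subset K U).
  { apply (connected_sub_side K U V (component_of_connected _ _) OU OV Cov Dis).
    exists w. split; [apply component_of_self; auto|]. exists e; auto. }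
  intros k Kk. destruct (KU k Kk) as [eps [Heps H]].
  apply H; [exact (proj1 (component_of_sub _ _ _ Kk))|rewrite edist_refl; auto].
Qed.

End Faces.

(** * Faces of polyhedra and the cut lines *)

Definition poly_face (fs : list (pset * list edge)) i := fst (nth i fs face_default).
Definition poly_edges (fs : list (pset * list edge)) i := snd (nth i fs face_default).

Definition face_decomposition (P : pset) (fs : list (pset * list edge)) : Prop :=
  (forall i, (i < length fs)%nat -> is_polygon_with (poly_face fs i) (poly_edges fs i)) /\
  (forall x, boundary P x <-> exists i, (i < length fs)%nat /\ poly_face fs i x) /\
  (forall i j x, (i < length fs)%nat -> (j < length fs)%nat -> i <> j ->
     poly_face fs i x -> poly_face fs j x ->
     (exists e, In e (poly_edges fs i) /\
        (exists e', In e' (poly_edges fs j) /\ same_edge e e') /\ seg e x) \/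
     ((exists e, In e (poly_edges fs i) /\ is_endpoint e x) /\
      (exists e, In e (poly_edges fs j) /\ is_endpoint e x))).

Lemma polyhedron_decomposition P : is_polyhedron P ->
  closed_set P /\ subset P (closure (interior P)) /\ exists fs, face_decomposition P fs.
Proof.
  intros [Hc [_ [_ [Hreg [fs [H1 [H2 [_ [H4 _]]]]]]]]].
  split; [|split]; auto. exists fs. split; [|split]; auto.
Qed.

Definition polygon_in_plane (Q : pset) (es : list edge) (Pl : pset) : Prop :=
  is_plane Pl /\ subset Q Pl /\ closed_set Q /\ (exists w, rel_interior Pl Q w) /\
  (forall x, (Q x /\ ~ rel_interior Pl Q x) <-> exists e, In e es /\ seg e x).

Lemma polygon_plane Q es : is_polygon_with Q es -> exists Pl, polygon_in_plane Q es Pl.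
Proof. intros [Pl [H1 [H2 [H3 [_ [H5 [_ [H7 _]]]]]]]]. exists Pl. repeat split; auto; apply H7; auto. Qed.

Lemma endpoint_seg e v : is_endpoint e v -> seg e v.
Proof.
  intros [->| ->]; [exists 0|exists 1]; (split; [lra|]); symmetry;
    [apply (seg_point0 (fst e) (snd e))|apply (seg_point1 (fst e) (snd e))].
Qed.

Lemma list_of_witnesses {A : Type} (n : nat) (Phi : nat -> A -> Prop) :
  (forall i, (i < n)%nat -> exists a, Phi i a) ->
  exists l, (forall a, In a l -> exists i, (i < n)%nat /\ Phi i a) /\
            (forall i, (i < n)%nat -> exists a, In a l /\ Phi i a).
Proof.
  induction n as [|n IH]; intros H.
  - exists nil. split; [intros a []|intros i Hi; lia].
  - destruct IH as [l [H1 H2]]; [intros i Hi; apply H; lia|].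
    destruct (H n (Nat.lt_succ_diag_r n)) as [an Han].
    exists (an :: l). split.
    + intros a [<-|Ha]; [exists n; split; auto|]. destruct (H1 a Ha) as [i [Hi Hp]]. exists i; split; auto.
    + intros i Hi. destruct (Nat.eq_dec i n) as [->|Hin]; [exists an; split; auto; left; auto|].
      destruct (H2 i) as [a [Ha Hp]]; [lia|]. exists a; split; auto. right; auto.
Qed.

Section Polyhedron.

Variables (S : list pset) (P : pset) (fs : list (pset * list edge)).
Hypotheses (HPS : In P S) (HPc : closed_set P) (HPreg : subset P (closure (interior P)))
  (HPD : face_decomposition P fs).

(** A point of the relative interior of a polygon lies on no other polygon, hence is a flat point
    of [P] whose flat plane is that of the polygon. *)
Lemma polygon_plane_face_plane i Pi : (i < length fs)%nat ->
  polygon_in_plane (poly_face fs i) (poly_edges fs i) Pi -> face_planes S Pi.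
Proof.
  destruct HPD as [PD1 [PD2 PD3]].
  intros Hi [HPi [Hsub [Hcl [[w Hw] Hbd]]]].
  assert (Fw : poly_face fs i w) by (destruct Hw; auto).
  assert (Nj : forall j, (j < length fs)%nat -> j <> i -> ~ poly_face fs j w).
  { intros j Hj Hji Fj.
    enough (Hb : exists e, In e (poly_edges fs i) /\ seg e w) by exact (proj2 (proj2 (Hbd w) Hb) Hw).
    destruct (PD3 i j w Hi Hj (not_eq_sym Hji) Fw Fj) as [[e [He [_ Hs]]]|[[e [He Hv]] _]];
      exists e; split; auto. apply endpoint_seg; auto. }
  destruct (nat_uniform_radius (length fs)
              (fun j r => j <> i -> forall b, edist w b < r -> ~ poly_face fs j b)) as [r [Hr Hrr]].
  { intros a e1 e2 H [H0 H1] Ha b Hb. apply H; auto. lra. }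
  { intros j Hj. destruct (Nat.eq_dec j i) as [->|Hji]; [exists 1; split; [lra|tauto]|].
    destruct (polygon_plane _ _ (PD1 j Hj)) as [Plj [_ [_ [Hclj _]]]].
    destruct (Hclj w (Nj j Hj Hji)) as [rj [Hrj Hb]]. exists rj. split; auto. }
  assert (Bw : boundary P w) by (apply PD2; eauto).
  assert (Hfl : forall b, boundary P b -> edist w b < r -> Pi b).
  { intros b Bb Hb. apply PD2 in Bb. destruct Bb as [j [Hj Fj]].
    destruct (Nat.eq_dec j i) as [->|Hji]; [apply Hsub; auto|].
    exfalso. exact (Hrr j Hj Hji b Hb Fj). }
  assert (Fw' : flat_point P w) by (split; auto; exists r; split; auto; exists Pi; auto).
  split; auto. exists P, (closure (component_of (flat_point P) w)). split; auto. split.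
  - exists (component_of (flat_point P) w). split; [exists w; split; auto; tauto|tauto].
  - intros y Hy. apply (closed_closure Pi y (plane_closed Pi HPi)).
    apply (closure_mono (component_of (flat_point P) w)); auto.
    apply (flat_component_sub_plane P HPc HPreg w r Pi); auto.
Qed.

(** Near a boundary point that is not flat in the direction of [Pl], some polygon of the
    decomposition leaves [Pl]; its plane belongs to the scene and cuts [Pl] through the point. *)
Lemma nonflat_point_on_cut_line Pl y : face_planes S Pl -> Pl y -> boundary P y ->
  (forall e, 0 < e -> ~ (forall b, boundary P b -> edist y b < e -> Pl b)) -> cut_lines S Pl y.
Proof.
  destruct HPD as [PD1 [PD2 PD3]].
  intros HPl Py By Hnf.
  assert (Hex : exists i, (i < length fs)%nat /\
                  ~ exists r, 0 < r /\ forall b, poly_face fs i b -> edist y b < r -> Pl b).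
  { apply NNPP; intro Hn.
    destruct (nat_uniform_radius (length fs)
                (fun i r => forall b, poly_face fs i b -> edist y b < r -> Pl b)) as [r [Hr Hrr]].
    { intros a e1 e2 H [H0 H1] b Hb Hd. apply H; auto. lra. }
    { intros i Hi. apply NNPP; intro H2. apply Hn. exists i; auto. }
    apply (Hnf r Hr). intros b Bb Hb. apply PD2 in Bb. destruct Bb as [j [Hj Fj]].
    apply (Hrr j Hj); auto. }
  destruct Hex as [i [Hi Hni]].
  assert (Hnear : forall r, 0 < r -> exists b, poly_face fs i b /\ edist y b < r /\ ~ Pl b).
  { intros r Hr. apply NNPP; intro H. apply Hni. exists r. split; auto.
    intros b Fb Hb. apply NNPP; intro Hp. apply H. exists b; auto. }
  destruct (polygon_plane _ _ (PD1 i Hi)) as [Pi HPP].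
  pose proof HPP as [HPi [Hsub [Hcl _]]].
  assert (Fiy : poly_face fs i y).
  { apply closed_closure; auto. intros r Hr. destruct (Hnear r Hr) as [b [Fb [Hb _]]]. exists b; auto. }
  destruct (Hnear 1) as [b0 [Fb0 [_ Nb0]]]; [lra|].
  exists Pi. split; [apply (polygon_plane_face_plane i Pi); auto|]. split; [|split; auto].
  intro Hpar. apply Nb0. apply (proj2 (parallel_meet_eq Pl Pi y Hpar Py (Hsub y Fiy) b0)); auto.
Qed.

Definition disk_interior (Pl F : pset) : pset := fun y => exists rho, 0 < rho /\ subset (disk Pl y rho) F.

Lemma face_not_disk_interior_on_cut_line F Pl y : is_face P F -> plane_of F Pl -> face_planes S Pl ->
  F y -> ~ disk_interior Pl F y -> cut_lines S Pl y.
Proof.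
  intros HF [HPl HFs] HPi Fy Hnr.
  assert (By : boundary P y) by (eapply face_sub_boundary; eauto).
  apply nonflat_point_on_cut_line; auto. intros e He Hfl. apply Hnr.
  destruct (face_as_closure P F HF) as [x0 [Fx0 EF]]. rewrite EF in Fy.
  destruct (Fy (e/2)) as [c [Kc Hc]]; [lra|].
  pose proof (flat_disk_sub_component P HPc HPreg x0 y e Pl c By HPl He Hfl Kc Hc) as Hd.
  exists (e/2). split; [lra|]. intros w Hw. rewrite EF. apply closure_self, Hd; auto.
Qed.

(** [disk_interior Pl F] is open and the complement of [F] is open; a connected set avoiding the
    cut lines cannot meet both, as the relative boundary of [F] lies on cut lines. *)
Lemma connected_sub_face F Pl (C : pset) : is_face P F -> plane_of F Pl -> face_planes S Pl ->
  connected C -> subset C Pl -> (forall y, C y -> ~ cut_lines S Pl y) ->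
  (exists y0, C y0 /\ disk_interior Pl F y0) -> subset C F.
Proof.
  intros HF HPF HPi HC HCP HCc Hy0.
  set (U := disk_interior Pl F). set (V := fun y => ~ F y).
  assert (OU : open_set U).
  { intros u [r [Hr H]]. exists (r/2). split; [lra|]. intros u' Hu'. exists (r/2). split; [lra|].
    intros w [Pw Hw]. apply H. split; auto. pose proof (edist_triangle u u' w). lra. }
  assert (OV : open_set V).
  { intros u Hu. destruct (not_closure F u) as [r [Hr H]]; [intro; apply Hu; eapply face_closed; eauto|].
    exists r. split; auto. intros y Hy Fy. specialize (H y Fy). lra. }
  assert (Cov : subset C (fun x => U x \/ V x)).
  { intros y Cy. destruct (classic (F y)) as [Fy|Fy]; [|right; auto].
    destruct (classic (U y)) as [Uy|Uy]; [left; auto|].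
    exfalso. apply (HCc y Cy). eapply face_not_disk_interior_on_cut_line; eauto. }
  assert (Dis : forall x, ~ (C x /\ U x /\ V x)).
  { intros x [Cx [[r [Hr H]] Vx]]. apply Vx, H. split; [apply HCP; auto|rewrite edist_refl; auto]. }
  intros y Cy. destruct (connected_sub_side C U V HC OU OV Cov Dis Hy0 y Cy) as [r [Hr H]].
  apply H. split; [apply HCP; auto|rewrite edist_refl; auto].
Qed.

(** A face plane outside the list of polygon planes would have, inside a face disc, a point off
    every polygon plane: a boundary point on no polygon. *)
Lemma polyhedron_face_planes_finite :
  exists LP : list pset, (forall Q, In Q LP -> face_planes S Q) /\
    (forall Q F, is_face P F -> plane_of F Q -> In Q LP).
Proof.
  destruct HPD as [PD1 [PD2 PD3]].
  destruct (list_of_witnesses (length fs) (fun i Q => polygon_in_plane (poly_face fs i) (poly_edges fs i) Q))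
    as [LP [H1 H2]].
  { intros i Hi. apply polygon_plane; auto. }
  exists LP. split.
  - intros Q HQ. destruct (H1 Q HQ) as [i [Hi Hp]]. eapply polygon_plane_face_plane; eauto.
  - intros Q F HF [HQ HFQ].
    destruct (face_contains_disk P HPc HPreg F HF) as [z [Pz [rho [HPz [Hr [Pzz Hd]]]]]].
    assert (E : forall y, Pz y <-> Q y)
      by (apply (plane_eq_of_disk Pz Q z rho); auto; intros y Py Hy; apply HFQ, Hd; split; auto).
    apply NNPP; intro Hn.
    destruct (plane_avoid_planes Q LP HQ) with (z := z) (r := rho) as [y [Qy [Hy Hoff]]];
      [|apply E; auto|auto|].
    + intros Q' HQ'. destruct (H1 Q' HQ') as [i [Hi [HQ'p _]]]. split; auto.
      apply NNPP; intro Hn2. apply Hn.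
      replace Q with Q'; auto. symmetry. apply plane_incl_eq; auto.
      intros x Qx. apply NNPP; intro Hx. apply Hn2. exists x; auto.
    + assert (By : boundary P y) by (apply (face_sub_boundary P F HF), Hd; split; auto; apply E; auto).
      apply PD2 in By. destruct By as [i [Hi Fi]].
      destruct (H2 i Hi) as [Qi [HQi [_ [Hs _]]]]. exact (Hoff Qi HQi (Hs y Fi)).
Qed.

End Polyhedron.

Lemma face_planes_finite S : (forall P, In P S -> is_polyhedron P) ->
  exists L, (forall Q, In Q L -> face_planes S Q) /\ (forall Q, face_planes S Q -> In Q L).
Proof.
  intros HS.
  assert (G : forall S', incl S' S -> exists L, (forall Q, In Q L -> face_planes S Q) /\
     (forall Q P F, In P S' -> is_face P F -> plane_of F Q -> In Q L)).
  { induction S' as [|P S' IH]; intros Hsub.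
    - exists nil. split; [intros Q []|intros Q P F []].
    - destruct IH as [L1 [A1 B1]]; [intros Q HQ; apply Hsub; right; auto|].
      assert (HPS : In P S) by (apply Hsub; left; auto).
      destruct (polyhedron_decomposition P (HS P HPS)) as [HPc [HPreg [fs HPD]]].
      destruct (polyhedron_face_planes_finite S P fs HPS HPc HPreg HPD) as [LP [A2 B2]].
      exists (LP ++ L1). split.
      + intros Q HQ. apply in_app_or in HQ. destruct HQ; auto.
      + intros Q P' F [<-|HP'] HF HQ; apply in_or_app; [left|right]; eauto. }
  destruct (G S (incl_refl S)) as [L [A B]]. exists L. split; auto.
  intros Q [HQ [P [F [HPS [HF HFQ]]]]]. eapply B; eauto. split; auto.
Qed.

(** * Sign vectors with respect to finitely many lines *)

Definition aff (nc : R3 * R) (y : R3) : R := dot (fst nc) y - snd nc.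
Definition off_lines (Ls : list (R3 * R)) (y : R3) : Prop := forall nc, In nc Ls -> aff nc y <> 0.
Definition same_side (Ls : list (R3 * R)) (y0 y : R3) : Prop :=
  forall nc, In nc Ls -> 0 < aff nc y0 * aff nc y.
Definition sign_vector (Ls : list (R3 * R)) (y : R3) : list bool :=
  map (fun nc => if Rlt_dec 0 (aff nc y) then true else false) Ls.

Fixpoint all_sign_vectors (n : nat) : list (list bool) :=
  match n with
  | O => nil :: nil
  | S n => map (cons true) (all_sign_vectors n) ++ map (cons false) (all_sign_vectors n)
  end.

Lemma in_all_sign_vectors Ls y : In (sign_vector Ls y) (all_sign_vectors (length Ls)).
Proof.
  unfold sign_vector. induction Ls as [|nc Ls IH]; simpl; [left; auto|].
  apply in_or_app. destruct Rlt_dec; [left|right]; apply in_map; auto.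
Qed.

Lemma same_side_ball Ls y0 : off_lines Ls y0 ->
  exists rho, 0 < rho /\ forall y, edist y0 y < rho -> same_side Ls y0 y.
Proof.
  intros Hoff.
  destruct (list_uniform_radius Ls (fun nc rho => forall y, edist y0 y < rho -> 0 < aff nc y0 * aff nc y))
    as [r [Hr H]].
  { intros a e e' H [H0 H1] y Hy. apply H. lra. }
  { intros [n c] Hnc. apply (dot_neq_ball n c y0). specialize (Hoff _ Hnc). unfold aff in Hoff. simpl in Hoff. lra. }
  exists r; split; auto. intros y Hy nc Hnc. apply H; auto.
Qed.

Lemma same_side_sign_vector Ls y0 y : off_lines Ls y0 -> off_lines Ls y ->
  sign_vector Ls y0 = sign_vector Ls y -> same_side Ls y0 y.
Proof.
  induction Ls as [|nc Ls IH]; intros H0 H1 Hs nc' Hnc'; [destruct Hnc'|].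
  simpl in Hs. injection Hs as Hh Ht. destruct Hnc' as [<-|Hnc'].
  - specialize (H0 nc (or_introl eq_refl)). specialize (H1 nc (or_introl eq_refl)).
    destruct (Rlt_dec 0 (aff nc y0)), (Rlt_dec 0 (aff nc y)); try discriminate; nra.
  - apply IH; auto; intros nc'' H; [apply H0|apply H1]; right; auto.
Qed.

Lemma same_side_trans Ls y0 y1 y : same_side Ls y1 y0 -> same_side Ls y1 y -> same_side Ls y0 y.
Proof.
  intros H0 H1 nc Hnc. specialize (H0 nc Hnc). specialize (H1 nc Hnc).
  destruct (Rlt_le_dec 0 (aff nc y1)).
  - assert (0 < aff nc y0) by (destruct (Rlt_le_dec 0 (aff nc y0)); auto; nra).
    assert (0 < aff nc y) by (destruct (Rlt_le_dec 0 (aff nc y)); auto; nra). nra.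
  - assert (aff nc y1 < 0) by (destruct (Req_dec (aff nc y1) 0) as [E|]; [rewrite E in H0; lra|lra]).
    assert (aff nc y0 < 0) by (destruct (Rlt_le_dec (aff nc y0) 0); auto; nra).
    assert (aff nc y < 0) by (destruct (Rlt_le_dec (aff nc y) 0); auto; nra). nra.
Qed.

Lemma same_side_convex Pl Ls y0 : is_plane Pl -> convex (fun y => Pl y /\ same_side Ls y0 y).
Proof.
  intros HP. apply convexI; [apply convex_plane; auto|].
  intros a b t Ha Hb Ht nc Hnc. specialize (Ha nc Hnc). specialize (Hb nc Hnc). unfold aff in *.
  rewrite dot_seg_point.
  replace (dot (fst nc) a + t * (dot (fst nc) b - dot (fst nc) a) - snd nc)
    with ((1 - t) * (dot (fst nc) a - snd nc) + t * (dot (fst nc) b - snd nc)) by ring.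
  destruct (Req_dec t 1) as [->|]; nra.
Qed.

Definition cell_radius (Pl : pset) (Ls : list (R3 * R)) (eps : R) : Prop :=
  forall y0, Pl y0 -> off_lines Ls y0 ->
    exists c, Pl c /\ forall y, Pl y -> edist c y < eps -> same_side Ls y0 y.

(** Only finitely many sign vectors occur, so one radius serves every realised region. *)
Lemma cell_radius_exists Pl Ls : exists eps, 0 < eps /\ cell_radius Pl Ls eps.
Proof.
  destruct (list_uniform_radius (all_sign_vectors (length Ls))
              (fun sg eps => forall y0, Pl y0 -> off_lines Ls y0 -> sign_vector Ls y0 = sg ->
                 exists c, Pl c /\ forall y, Pl y -> edist c y < eps -> same_side Ls y0 y))
    as [eps [He H]].
  { intros a e e' H [H0 H1] y0 P0 O0 S0. destruct (H y0 P0 O0 S0) as [c [Pc Hc]].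
    exists c; split; auto. intros y Py Hy. apply Hc; auto. lra. }
  { intros sg _.
    destruct (classic (exists y1, Pl y1 /\ off_lines Ls y1 /\ sign_vector Ls y1 = sg))
      as [[y1 [P1 [O1 S1]]]|Hn].
    - destruct (same_side_ball Ls y1 O1) as [r [Hr Hrr]]. exists r. split; auto.
      intros y0 P0 O0 S0. exists y1. split; auto. intros y Py Hy.
      apply (same_side_trans Ls y0 y1 y); auto.
      apply same_side_sign_vector; auto. congruence.
    - exists 1. split; [lra|]. intros y0 P0 O0 S0. exfalso. apply Hn. exists y0; auto. }
  exists eps. split; auto. intros y0 P0 O0. apply (H (sign_vector Ls y0)); auto.
  apply in_all_sign_vectors.
Qed.

Lemma closure_same_side Ls (G : pset) x : subset G (off_lines Ls) -> closure G x ->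
  exists y0, G y0 /\ closure (fun y => G y /\ same_side Ls y0 y) x.
Proof.
  intros HG Hc.
  destruct (closure_finite_union (all_sign_vectors (length Ls))
              (fun sg y => G y /\ sign_vector Ls y = sg) x) as [sg [_ Hsg]].
  { apply (closure_mono G); auto. intros y Gy. exists (sign_vector Ls y).
    split; auto. apply in_all_sign_vectors. }
  destruct (Hsg 1) as [y0 [[G0 S0] _]]; [lra|].
  exists y0. split; auto. apply (closure_mono (fun y => G y /\ sign_vector Ls y = sg)); auto.
  intros y [Gy Sy]. split; auto. apply same_side_sign_vector; auto. congruence.
Qed.

Definition cut_equations (S : list pset) (Pl : pset) (Ls : list (R3 * R)) : Prop :=
  (forall y, cut_lines S Pl y -> exists nc, In nc Ls /\ aff nc y = 0) /\
  (forall nc, In nc Ls -> fst nc <> vzero /\ exists q, Pl q /\ aff nc q <> 0).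

Lemma same_side_not_cut S Pl Ls y0 y : cut_equations S Pl Ls -> same_side Ls y0 y -> ~ cut_lines S Pl y.
Proof.
  intros [H1 _] Hs Hc. destruct (H1 y Hc) as [nc [Hnc E]]. specialize (Hs nc Hnc). rewrite E in Hs. lra.
Qed.

Lemma cut_equations_exist S Pl L : is_plane Pl -> (forall Q, face_planes S Q -> In Q L) ->
  exists Ls, cut_equations S Pl Ls.
Proof.
  intros HPl HL.
  assert (G : forall L0, exists Ls, (forall Q, In Q L0 -> is_plane Q -> ~ parallel Pl Q ->
      exists nc, In nc Ls /\ forall x, Q x <-> aff nc x = 0) /\
      (forall nc, In nc Ls -> fst nc <> vzero /\ exists q, Pl q /\ aff nc q <> 0)).
  { induction L0 as [|Q L0 [Ls [A B]]]; [exists nil; split; [intros Q []|intros nc []]|].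
    destruct (classic (is_plane Q /\ ~ parallel Pl Q)) as [[HQ Np]|Hn].
    - pose proof HQ as [n [c [Hn HQe]]]. exists ((n, c) :: Ls). split.
      + intros Q' [<-|HQ'] HQ'p Np'.
        * exists (n, c). split; [left; auto|]. intros x. unfold aff; simpl. rewrite HQe. lra.
        * destruct (A Q' HQ' HQ'p Np') as [nc [Hnc E]]. exists nc; split; auto. right; auto.
      + intros nc [<-|Hnc]; auto. simpl. split; auto.
        apply NNPP; intro Hs. apply Np. replace Q with Pl; [apply parallel_refl; auto|].
        apply plane_incl_eq; auto. intros x Px. apply HQe. unfold aff in Hs; simpl in Hs.
        apply NNPP; intro Hx. apply Hs. exists x. split; auto. lra.
    - exists Ls. split; auto. intros Q' [<-|HQ'] HQ'p Np'; [exfalso; apply Hn; auto|apply A; auto]. }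
  destruct (G L) as [Ls [A B]]. exists Ls. split; auto.
  intros y [Q [HQ [Np [Py Qy]]]]. destruct (A Q (HL Q HQ) (proj1 HQ) Np) as [nc [Hnc E]].
  exists nc; split; auto. apply E; auto.
Qed.

Lemma uniform_cell_radius S : (forall P, In P S -> is_polyhedron P) ->
  exists eps, 0 < eps /\ forall Pl, face_planes S Pl ->
    exists Ls, cut_equations S Pl Ls /\ cell_radius Pl Ls eps.
Proof.
  intros HS. destruct (face_planes_finite S HS) as [L [LA LB]].
  destruct (list_uniform_radius L (fun Pl eps => exists Ls, cut_equations S Pl Ls /\ cell_radius Pl Ls eps))
    as [eps [He Heps]].
  - intros Pl e e' [Ls [A C]] [H0 H1]. exists Ls. split; auto.
    intros y0 P0 O0. destruct (C y0 P0 O0) as [c [Pc Hc]]. exists c; split; auto.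
    intros y Py Hy. apply Hc; auto. lra.
  - intros Pl HPl. destruct (LA Pl HPl) as [HP _].
    destruct (cut_equations_exist S Pl L HP LB) as [Ls HLs].
    destruct (cell_radius_exists Pl Ls) as [eps [He C]]. exists eps. split; auto. exists Ls; auto.
  - exists eps. split; auto.
Qed.

(** * Reconstruction from markers *)

Lemma same_side_refl Ls y : off_lines Ls y -> same_side Ls y y.
Proof. intros H nc Hnc. specialize (H nc Hnc). nra. Qed.

Lemma same_side_sub_cell S Pl Ls y0 : is_plane Pl -> cut_equations S Pl Ls -> Pl y0 -> off_lines Ls y0 ->
  subset (fun y => Pl y /\ same_side Ls y0 y) (component_of (fun y => Pl y /\ ~ cut_lines S Pl y) y0).
Proof.
  intros HPl HLs P0 O0 y Hy. exists (fun y => Pl y /\ same_side Ls y0 y).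
  split; [apply convex_connected, same_side_convex; auto|].
  split; [intros w [Pw Sw]; split; [|eapply same_side_not_cut]; eauto|].
  split; auto. split; auto. apply same_side_refl; auto.
Qed.

Lemma is_cell_component S Pl y0 : Pl y0 -> ~ cut_lines S Pl y0 ->
  is_cell S Pl (component_of (fun y => Pl y /\ ~ cut_lines S Pl y) y0).
Proof. intros P0 N0. exists y0. split; [split; auto|tauto]. Qed.

(** Every point of a face is close to a disc of the face, and a disc meets the complement of
    finitely many lines. *)
Lemma face_closure_generic_points P F Pl S Ls x :
  closed_set P -> subset P (closure (interior P)) -> is_face P F -> plane_of F Pl ->
  cut_equations S Pl Ls -> F x ->
  closure (fun y => Pl y /\ off_lines Ls y /\ disk_interior Pl F y) x.
Proof.
  intros HPc HPreg HF [HPl HFs] [_ HLs] Fx d Hd.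
  destruct (face_as_closure P F HF) as [x0 [Fx0 EF]].
  assert (Fx' := Fx). rewrite EF in Fx'. destruct (Fx' (d/2)) as [z [Kz Hz]]; [lra|].
  destruct (component_disk P HPc HPreg x0 Pl z HPl) as [rho [Hrho Hdisk]]; auto.
  { rewrite <- EF. exact HFs. }
  destruct (plane_avoid_planes Pl (map (fun nc y => aff nc y = 0) Ls) HPl) with (z := z) (r := Rmin (rho/2) (d/2))
    as [y [Py [Hy Hoff]]].
  - intros Q HQ. apply in_map_iff in HQ. destruct HQ as [nc [<- Hnc]].
    destruct (HLs nc Hnc) as [Hn [q [Pq Nq]]]. split; [|exists q; auto].
    exists (fst nc), (snd nc). split; auto. intros w. unfold aff. lra.
  - apply HFs. rewrite EF. apply closure_self; auto.
  - apply Rmin_pos; lra.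
  - pose proof (Rmin_l (rho/2) (d/2)); pose proof (Rmin_r (rho/2) (d/2)).
    pose proof (edist_triangle x z y).
    exists y. split; [|lra]. split; auto. split.
    + intros nc Hnc E. apply (Hoff (fun y => aff nc y = 0)); auto. apply in_map_iff. exists nc; auto.
    + exists (rho/2). split; [lra|]. intros w [Pw Hw]. rewrite EF. apply closure_self, Hdisk.
      split; auto. pose proof (edist_triangle z y w). lra.
Qed.

Lemma bounded_near_markers (M : list marker) eps (A : pset) :
  (forall y, A y -> exists p Pl, In (p, Pl) M /\ edist y p < eps) -> bounded_set A.
Proof.
  intros H.
  assert (HB : exists B, forall p Pl, In (p, Pl) M -> norm p <= B).
  { clear H. induction M as [|[q Q] M [B HB]]; [exists 0; intros p Pl []|].
    exists (Rmax (norm q) B). intros p Pl [E|Hm].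
    - injection E as -> ->. apply Rmax_l.
    - eapply Rle_trans; [eapply HB; eauto|apply Rmax_r]. }
  destruct HB as [B HB]. exists (B + eps). intros y Ay.
  destruct (H y Ay) as [p [Pl [Hm Hyp]]]. specialize (HB p Pl Hm).
  replace y with (vadd p (vsub y p)) by vring.
  pose proof (norm_add_le p (vsub y p)). unfold edist in Hyp. lra.
Qed.

Section Reconstruction.

Variables (S : list pset) (eps : R) (M : list marker).
Hypotheses (HS : forall P, In P S -> is_polyhedron P) (He : 0 < eps)
  (Heps : forall Pl, face_planes S Pl -> exists Ls, cut_equations S Pl Ls /\ cell_radius Pl Ls eps)
  (HM1 : forall p Pl, In (p, Pl) M -> exists P F, In P S /\ is_face P F /\ F p /\ plane_of F Pl)
  (HM2 : forall P F x, In P S -> is_face P F -> F x ->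
          exists p Pl, In (p, Pl) M /\ F p /\ plane_of F Pl /\ edist x p < eps).

Lemma marker_face_plane p Pl : In (p, Pl) M -> face_planes S Pl.
Proof.
  intros Hm. destruct (HM1 p Pl Hm) as [P [F [HPS [HF [Fp [HPl HFs]]]]]].
  split; auto. exists P, F; auto.
Qed.

Lemma face_plane_marked Pl : face_planes S Pl -> exists p, In (p, Pl) M.
Proof.
  intros [HPl [P [F [HPS [HF HFs]]]]].
  destruct (polyhedron_decomposition P (HS P HPS)) as [HPc [HPreg _]].
  destruct (face_nonempty P F HF) as [x Fx].
  destruct (HM2 P F x HPS HF Fx) as [p [Pl' [Hm [Fp [HP' Hd]]]]].
  exists p. replace Pl with Pl'; auto. apply (face_plane_unique P HPc HPreg F); auto. split; auto.
Qed.

Lemma face_point_in_marked_cell P F x : In P S -> is_face P F -> F x ->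
  exists p Pl C, In (p, Pl) M /\ face_planes S Pl /\ is_cell S Pl C /\
    bounded_set C /\ C p /\ closure C x.
Proof.
  intros HPS HF Fx.
  destruct (polyhedron_decomposition P (HS P HPS)) as [HPc [HPreg [fs HPD]]].
  destruct (HM2 P F x HPS HF Fx) as [p0 [Pl [Hm0 [_ [HPF _]]]]].
  pose proof HPF as [HPl HFs].
  pose proof (marker_face_plane p0 Pl Hm0) as HPi.
  destruct (Heps Pl HPi) as [Ls [HLs Hrad]].
  destruct (closure_same_side Ls _ x (fun y Hy => proj1 (proj2 Hy))
              (face_closure_generic_points P F Pl S Ls x HPc HPreg HF HPF HLs Fx))
    as [y0 [[P0 [O0 I0]] Hcl]].
  set (C := component_of (fun y => Pl y /\ ~ cut_lines S Pl y) y0).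
  pose proof (same_side_sub_cell S Pl Ls y0 HPl HLs P0 O0) as RC.
  assert (CF : subset C F).
  { apply (connected_sub_face S P fs HPS HPc HPreg HPD F Pl C HF HPF HPi (component_of_connected _ _));
      [intros y Cy; exact (proj1 (component_of_sub _ _ _ Cy))
      |intros y Cy; exact (proj2 (component_of_sub _ _ _ Cy))|].
    exists y0. split; auto. apply RC. split; auto. apply same_side_refl; auto. }
  (* a marker within [eps] of the centre of the region's [eps]-disc lies in the region *)
  destruct (Hrad y0 P0 O0) as [c [Pc Hc]].
  assert (Rc : same_side Ls y0 c) by (apply Hc; [|rewrite edist_refl]; auto).
  destruct (HM2 P F c HPS HF (CF c (RC c (conj Pc Rc)))) as [p [Pl' [Hm [Fp [HP' Hd]]]]].
  replace Pl' with Pl in * by (apply (face_plane_unique P HPc HPreg F); auto).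
  exists p, Pl, C. split; auto. split; auto. split.
  { apply is_cell_component; auto. eapply same_side_not_cut; eauto. apply same_side_refl; auto. }
  split.
  { apply (bounded_near_markers M eps). intros y Cy.
    destruct (HM2 P F y HPS HF (CF y Cy)) as [q [Q [Hq [_ [_ Hyq]]]]]. eauto. }
  split; [apply RC; split; [apply HFs; auto|apply Hc; auto]|].
  refine (closure_mono _ C x _ Hcl). intros y [[Py _] Sy]. apply RC. split; auto.
Qed.

Lemma marked_cell_closure_in_face p Pl C x : In (p, Pl) M -> is_cell S Pl C -> C p -> closure C x ->
  exists P F, In P S /\ is_face P F /\ F x.
Proof.
  intros Hm [y1 [_ HC]] Cp Hx.
  destruct (HM1 p Pl Hm) as [P [F [HPS [HF [Fp HPF]]]]].
  destruct (polyhedron_decomposition P (HS P HPS)) as [HPc [HPreg [fs HPD]]].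
  pose proof (marker_face_plane p Pl Hm) as HPi.
  assert (CA : forall y, C y -> Pl y /\ ~ cut_lines S Pl y)
    by (intros y Cy; apply HC in Cy; exact (component_of_sub _ _ _ Cy)).
  assert (CF : subset C F).
  { apply (connected_sub_face S P fs HPS HPc HPreg HPD F Pl C HF HPF HPi);
      [rewrite (pset_ext C _ HC); apply component_of_connected
      |intros y Cy; apply CA; auto|intros y Cy; apply CA; auto|].
    exists p. split; auto. apply NNPP; intro Hn.
    apply (proj2 (CA p Cp)). eapply face_not_disk_interior_on_cut_line; eauto. }
  exists P, F. split; auto. split; auto. apply (face_closed P F x HF).
  apply (closure_mono C); auto.
Qed.

End Reconstruction.

Theorem mainTheorem2 (S : list pset) (HS : forall P, In P S -> is_polyhedron P) :
  exists eps, 0 < eps /\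
  forall M : list marker,
    (forall p Pl, In (p, Pl) M ->
       exists P F, In P S /\ is_face P F /\ F p /\ plane_of F Pl) ->
    (forall P F x, In P S -> is_face P F -> F x ->
       exists p Pl, In (p, Pl) M /\ F p /\ plane_of F Pl /\ edist x p < eps) ->
    ((forall p Pl, In (p, Pl) M -> face_planes S Pl) /\
     (forall Pl, face_planes S Pl ->
        exists p Pl', In (p, Pl') M /\ forall y, Pl' y <-> Pl y)) /\
    (forall x,
       (exists P F, In P S /\ is_face P F /\ F x) <->
       (exists p Pl C, In (p, Pl) M /\ face_planes S Pl /\ is_cell S Pl C /\
          bounded_set C /\ C p /\ closure C x)).
Proof.
  destruct (uniform_cell_radius S HS) as [eps [He Heps]].
  exists eps. split; auto. intros M HM1 HM2.
  split; [split|].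
  - exact (marker_face_plane S M HM1).
  - intros Pl HPl. destruct (face_plane_marked S eps M HS HM2 Pl HPl) as [p Hm].
    exists p, Pl. split; auto. tauto.
  - intros x. split.
    + intros [P [F [HPS [HF Fx]]]].
      exact (face_point_in_marked_cell S eps M HS He Heps HM1 HM2 P F x HPS HF Fx).
    + intros [p [Pl [C [Hm [_ [Hcell [_ [Cp Hx]]]]]]]].
      exact (marked_cell_closure_in_face S M HS HM1 p Pl C x Hm Hcell Cp Hx).
Qed.
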